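(* Let $k$ be a field, $D\ge0$ an integer and $e_1,e_2,e_3$ nonnegative integers with $e_i\le D$ for all $i$ and $e_i+e_j\le D$ for all $i\ne j$. Let $R_1,R_2,R_3\in k[u,v]$ be nonzero homogeneous polynomials of degrees $e_1,e_2,e_3$. Then the $k$-vector space $$\{(R'_1,R'_2,R'_3)\in k[u,v]_{D-e_1}\times k[u,v]_{D-e_2}\times k[u,v]_{D-e_3}:\ R_1R'_1+R_2R'_2+R_3R'_3=0\}$$ has dimension $2+2D-(e_1+e_2+e_3)+\deg\gcd(R_1,R_2,R_3)$.
   Context: $k[u,v]_m$ denotes the space of homogeneous polynomials of degree $m$ in two variables (including $0$). *)

(* k[u,v] is represented as {poly {poly k}}:
   for p : {poly {poly k}}, the coefficient of u^i v^j is (p`_j)`_i. *)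
From HB Require Import structures.
From mathcomp Require Import all_boot all_order all_algebra.
Set Implicit Arguments. Unset Strict Implicit. Unset Printing Implicit Defensive.
Import GRing.Theory.
Local Open Scope ring_scope.

Notation bipoly k := {poly {poly k}}.

Definition bicoef (k : fieldType) (p : bipoly k) (i j : nat) : k := (p`_j)`_i.

Definition homog (k : fieldType) (m : nat) (p : bipoly k) : Prop :=
  forall i j, bicoef p i j != 0 -> (i + j)%N = m.

Definition bconst (k : fieldType) (c : k) : bipoly k := c%:P%:P.

Definition bdvd (k : fieldType) (g p : bipoly k) : Prop := exists q, p = g * q.

Definition is_gcd3 (k : fieldType) (g p1 p2 p3 : bipoly k) : Prop :=
  [/\ bdvd g p1, bdvd g p2, bdvd g p3 &
      forall h, bdvd h p1 -> bdvd h p2 -> bdvd h p3 -> bdvd h g].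

Definition triple (k : fieldType) := (bipoly k * bipoly k * bipoly k)%type.

Definition tcomb (k : fieldType) (n : nat) (c : 'I_n -> k) (b : 'I_n -> triple k)
  : triple k :=
  (\sum_(i < n) bconst (c i) * (b i).1.1,
   \sum_(i < n) bconst (c i) * (b i).1.2,
   \sum_(i < n) bconst (c i) * (b i).2).

Definition has_dim (k : fieldType) (S : triple k -> Prop) (n : nat) : Prop :=
  exists b : 'I_n -> triple k,
    [/\ forall i, S (b i),
        (forall c : 'I_n -> k, tcomb c b = (0, 0, 0) -> forall i, c i = 0) &
        (forall x, S x -> exists c : 'I_n -> k, x = tcomb c b)].

Definition syz (k : fieldType) (D e1 e2 e3 : nat) (R1 R2 R3 : bipoly k)
  (x : triple k) : Prop :=
  [/\ homog (D - e1) x.1.1, homog (D - e2) x.1.2, homog (D - e3) x.2 &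
      R1 * x.1.1 + R2 * x.1.2 + R3 * x.2 = 0].

From HB Require Import structures.
From mathcomp Require Import all_boot all_order all_algebra.
From mathcomp Require Import ring zify.
Import GRing.Theory.
Set Implicit Arguments. Unset Strict Implicit. Unset Printing Implicit Defensive.
Local Open Scope ring_scope.

(* Setting u = 1 identifies forms of degree m in k[u,v] with polynomials of
   degree <= m in k[v], and homogenizing at degree m inverts this.  Let Pi be
   the dehomogenized Ri, g = gcd(P1, P2, P3), Pi = Qi g, and let d be the
   largest integer with deg Qi <= ei - d for all i (the degree of the
   homogeneous gcd).  Then the dehomogenized syzygy map
   (Y1, Y2, Y3) |-> P1 Y1 + P2 Y2 + P3 Y3, on deg Yi <= D - ei, has image
   exactly g * {W | deg W <= D - d}: one inclusion is degree counting, the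
   other comes from a Bezout relation sum Qi Yi = 1 and two Euclidean
   divisions, using ei + ej <= D and that some Qi has degree exactly ei - d.
   Rank-nullity gives the dimension sum (D - ei + 1) - (D - d + 1), which is
   2 + 2D + d - (e1 + e2 + e3).  Finally the homogenization G of g at degree d
   divides every Ri, and G u^(D-d), G v^(D-d) lie in the ideal (R1, R2, R3);
   as u^t and v^t are coprime, every common divisor of the Ri divides G. *)

Definition dehom (k : fieldType) (p : bipoly k) : {poly k} :=
  map_poly (horner_eval 1) p.

(* The homogenization u^m P(v/u) of P, a form of degree m if deg P <= m. *)
Definition homogenize (k : fieldType) (m : nat) (P : {poly k}) : bipoly k :=
  \poly_(j < m.+1) (P`_j *: 'X^(m - j)).

Section Homogenization.
Variable k : fieldType.
Implicit Types (P Q : {poly k}) (p q : bipoly k).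

Lemma dehomM p q : dehom (p * q) = dehom p * dehom q.
Proof. exact: rmorphM. Qed.

Lemma dehomD p q : dehom (p + q) = dehom p + dehom q.
Proof. exact: rmorphD. Qed.

Lemma homog_homogenize m P : homog m (homogenize m P).
Proof.
move=> i j; rewrite /bicoef coef_poly; case: ltnP => hj; last by rewrite coef0 eqxx.
rewrite coefZ coefXn; have [->|_] := eqVneq i (m - j)%N; last by rewrite mulr0 eqxx.
by move=> _; rewrite subnK // -ltnS.
Qed.

Lemma dehom_homogenize m P : (size P <= m.+1)%N -> dehom (homogenize m P) = P.
Proof.
move=> hs; apply/polyP => j; rewrite coef_map /= coef_poly horner_evalE.
case: ltnP => hj; first by rewrite hornerZ hornerXn expr1n mulr1.
by rewrite horner0; move/leq_sizeP: hs => ->.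
Qed.

Lemma homog_coef_big m p j : homog m p -> (m < j)%N -> p`_j = 0.
Proof.
move=> hp hj; apply/polyP => i; rewrite coef0; apply/eqP; apply: contraTT hj => h.
by rewrite -(hp i j h) -leqNgt leq_addl.
Qed.

Lemma size_dehom m p : homog m p -> (size (dehom p) <= m.+1)%N.
Proof.
move=> hp; apply/leq_sizeP => j hj.
by rewrite coef_map /= (homog_coef_big hp hj) horner_evalE horner0.
Qed.

Lemma homogenize_dehom m p : homog m p -> homogenize m (dehom p) = p.
Proof.
move=> hp; apply/polyP => j; rewrite coef_poly coef_map /= horner_evalE.
case: (ltnP j m.+1) => hj; last by rewrite (homog_coef_big hp hj).
have -> : p`_j = (p`_j)`_(m - j) *: 'X^(m - j).
  apply/polyP => i; rewrite coefZ coefXn.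
  have [->|ne] := eqVneq i (m - j)%N; first by rewrite mulr1.
  rewrite mulr0; apply/eqP; apply: contraNT ne => /(hp i j) <-.
  by rewrite addnK.
by rewrite hornerZ hornerXn expr1n mulr1.
Qed.

Lemma homog_dehom_inj m p q :
  homog m p -> homog m q -> dehom p = dehom q -> p = q.
Proof.
by move=> hp hq E; rewrite -(homogenize_dehom hp) -(homogenize_dehom hq) E.
Qed.

Lemma homogenize_eq0 m P :
  (size P <= m.+1)%N -> (homogenize m P == 0) = (P == 0).
Proof.
move=> hs; apply/eqP/eqP => [E|->]; last first.
  by apply/polyP => j; rewrite coef_poly !coef0 scale0r if_same.
by rewrite -(dehom_homogenize hs) E /dehom rmorph0.
Qed.

Lemma dehom_eq0 m p : homog m p -> (dehom p == 0) = (p == 0).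
Proof.
move=> hp; apply/eqP/eqP => [E|->]; last exact: rmorph0.
by rewrite -(homogenize_dehom hp) E; apply/eqP; rewrite homogenize_eq0 ?size_poly0.
Qed.

Lemma homogD m p q : homog m p -> homog m q -> homog m (p + q).
Proof.
move=> hp hq i j; rewrite /bicoef !coefD.
by have [->|/hp] := eqVneq (p`_j)`_i 0; [rewrite add0r; apply: hq|].
Qed.

Lemma homogM m n p q : homog m p -> homog n q -> homog (m + n) (p * q).
Proof.
move=> hp hq i j; apply: contraNeq => ne; rewrite /bicoef coefM coef_sum.
apply/eqP/big1 => a _; rewrite coefM; apply: big1 => b _.
have [->|/hp Ep] := eqVneq (p`_a)`_b 0; first by rewrite mul0r.
have [->|/hq Eq] := eqVneq (q`_(j - a))`_(i - b) 0; first by rewrite mulr0.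
by have := ltn_ord a; have := ltn_ord b; move: ne; rewrite -Ep -Eq; lia.
Qed.

Lemma homog_comb3 D e1 e2 e3 (R1 R2 R3 x1 x2 x3 : bipoly k) :
  (e1 <= D)%N -> (e2 <= D)%N -> (e3 <= D)%N ->
  homog e1 R1 -> homog e2 R2 -> homog e3 R3 ->
  homog (D - e1) x1 -> homog (D - e2) x2 -> homog (D - e3) x3 ->
  homog D (R1 * x1 + R2 * x2 + R3 * x3).
Proof.
move=> h1 h2 h3 H1 H2 H3 X1 X2 X3.
have hM (e : nat) (R x : bipoly k) :
    (e <= D)%N -> homog e R -> homog (D - e) x -> homog D (R * x).
  by move=> he HR HX; have := homogM HR HX; rewrite subnKC.
apply: homogD; last exact: hM h3 H3 X3.
by apply: homogD; [exact: hM h1 H1 X1 | exact: hM h2 H2 X2].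
Qed.

Lemma homogenizeD m P Q : homogenize m (P + Q) = homogenize m P + homogenize m Q.
Proof.
apply/polyP => j; rewrite coefD !coef_poly.
by case: ifP => _; rewrite ?addr0 // coefD scalerDl.
Qed.

Lemma homogenizeZ m c P : homogenize m (c *: P) = bconst c * homogenize m P.
Proof.
apply/polyP => j; rewrite coefCM !coef_poly.
by case: ifP => _; rewrite ?mulr0 // coefZ mul_polyC scalerA.
Qed.

Lemma homogenize_sum m n (F : 'I_n -> {poly k}) :
  homogenize m (\sum_(i < n) F i) = \sum_(i < n) homogenize m (F i).
Proof.
apply: (big_morph _ (homogenizeD m)).
by apply/polyP => j; rewrite coef_poly !coef0 scale0r if_same.
Qed.

Lemma homog_uXn t : homog t (('X^t)%:P : bipoly k).
Proof.
move=> i j; rewrite /bicoef coefC; have [->|_] := eqVneq j 0%N; last by rewrite coef0 eqxx.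
by rewrite coefXn addn0; have [//|_] := eqVneq i t; rewrite mulr0n eqxx.
Qed.

Lemma homog_vXn t : homog t ('X^t : bipoly k).
Proof.
move=> i j; rewrite /bicoef coefXn; have [->|_] := eqVneq j t; last by rewrite coef0 eqxx.
by rewrite coef1; have [->|_] := eqVneq i 0%N; rewrite ?mulr0n ?eqxx.
Qed.

End Homogenization.

Section BoundedDecomposition.
Variable k : fieldType.
Implicit Types (P Q X Y W : {poly k}).

Lemma size_mul_bound P Q a b : (size P <= a)%N -> (size Q <= b)%N ->
  (size (P * Q)%R <= (a + b).-1)%N.
Proof.
move=> ha hb; apply: leq_trans (size_polyMleq P Q) _.
by case: (size P) ha => [|sp] ha; case: (size Q) hb => [|sq] hb /=; lia.
Qed.

Lemma size_cofactor_bound Q W f t : size Q = f.+1 -> (f <= t)%N ->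
  (size (Q * W)%R <= t.+1)%N -> (size W <= (t - f).+1)%N.
Proof.
move=> sQ ft; have [->|nzW] := eqVneq W 0; first by rewrite size_poly0.
rewrite size_mul // -?size_poly_eq0 ?sQ // addSn /=.
by move: (size W) => n; lia.
Qed.

(* Reduce X Y1
   modulo Q2, then the remaining part of X Y2 modulo Q3; the Q3-cofactor is
   bounded a posteriori. *)
Lemma bounded_decomp3 Q1 Q2 Q3 Y1 Y2 Y3 X (f1 f2 f3 t : nat) :
  Q1 * Y1 + Q2 * Y2 + Q3 * Y3 = 1 -> Q2 != 0 ->
  (size Q1 <= f1.+1)%N -> (size Q2 <= f2.+1)%N -> size Q3 = f3.+1 ->
  (f1 + f2 <= t)%N -> (f2 + f3 <= t)%N -> (size X <= t.+1)%N ->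
  exists X1 X2 X3, X = Q1 * X1 + Q2 * X2 + Q3 * X3 /\
    [/\ (size X1 <= (t - f1).+1)%N, (size X2 <= (t - f2).+1)%N &
        (size X3 <= (t - f3).+1)%N].
Proof.
move=> EY nzQ2 s1 s2 s3 h12 h23 sX.
have nzQ3 : Q3 != 0 by rewrite -size_poly_eq0 s3.
have euclid P Q : Q != 0 ->
    exists C R, R = P - C * Q /\ (size R < size Q)%N.
  move=> nzQ; exists (P %/ Q), (P %% Q); split; last exact: ltn_modpN0.
  by apply/eqP; rewrite eq_sym subr_eq addrC -divp_eq.
have [C [A1 [EA1 lA1]]] := euclid (X * Y1) Q2 nzQ2.
have [C' [A2 [EA2 lA2]]] := euclid (X * Y2 + Q1 * C) Q3 nzQ3.
pose A3 := X * Y3 + Q2 * C'.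
have EX : X = Q1 * A1 + Q2 * A2 + Q3 * A3.
  by rewrite EA1 EA2 /A3 -[X in LHS]mulr1 -EY; ring.
have sA1 : (size A1 <= f2)%N by rewrite -ltnS (leq_trans lA1).
have sA2 : (size A2 <= f3)%N by rewrite -ltnS -s3.
have sA3 : (size (Q3 * A3)%R <= t.+1)%N.
  have -> : Q3 * A3 = X - Q1 * A1 - Q2 * A2 by rewrite [X in RHS]EX; ring.
  rewrite -addrA -opprD; apply: leq_trans (size_polyD _ _) _.
  rewrite geq_max sX size_polyN; apply: leq_trans (size_polyD _ _) _.
  rewrite geq_max; apply/andP; split.
    by apply: leq_trans (size_mul_bound s1 sA1) _; lia.
  by apply: leq_trans (size_mul_bound s2 sA2) _; lia.
exists A1, A2, A3; split => //; split; [lia | lia |].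
by apply: size_cofactor_bound s3 _ sA3; lia.
Qed.

Lemma bounded_decomp3_sym Q1 Q2 Q3 Y1 Y2 Y3 X (f1 f2 f3 t : nat) :
  Q1 * Y1 + Q2 * Y2 + Q3 * Y3 = 1 ->
  Q1 != 0 -> Q2 != 0 -> Q3 != 0 ->
  (size Q1 <= f1.+1)%N -> (size Q2 <= f2.+1)%N -> (size Q3 <= f3.+1)%N ->
  size Q1 = f1.+1 \/ size Q2 = f2.+1 \/ size Q3 = f3.+1 ->
  (f1 + f2 <= t)%N -> (f1 + f3 <= t)%N -> (f2 + f3 <= t)%N ->
  (size X <= t.+1)%N ->
  exists X1 X2 X3, X = Q1 * X1 + Q2 * X2 + Q3 * X3 /\
    [/\ (size X1 <= (t - f1).+1)%N, (size X2 <= (t - f2).+1)%N &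
        (size X3 <= (t - f3).+1)%N].
Proof.
move=> EY n1 n2 n3 s1 s2 s3 [e|[e|e]] h12 h13 h23 sX.
- have EY' : Q3 * Y3 + Q2 * Y2 + Q1 * Y1 = 1 by rewrite -EY; ring.
  have h32 : (f3 + f2 <= t)%N by rewrite addnC.
  have h21 : (f2 + f1 <= t)%N by rewrite addnC.
  have [X3 [X2 [X1 [-> [l3 l2 l1]]]]] := bounded_decomp3 EY' n2 s3 s2 e h32 h21 sX.
  by exists X1, X2, X3; split; first ring.
- have EY' : Q1 * Y1 + Q3 * Y3 + Q2 * Y2 = 1 by rewrite -EY; ring.
  have h32 : (f3 + f2 <= t)%N by rewrite addnC.
  have [X1 [X3 [X2 [-> [l1 l3 l2]]]]] := bounded_decomp3 EY' n3 s1 s3 e h13 h32 sX.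
  by exists X1, X2, X3; split; first ring.
- exact: bounded_decomp3 EY n2 s1 s2 e h12 h23 sX.
Qed.

End BoundedDecomposition.

Lemma size_comb3 (k : fieldType) (D e1 e2 e3 : nat) (P1 P2 P3 Y1 Y2 Y3 : {poly k}) :
  (e1 <= D)%N -> (e2 <= D)%N -> (e3 <= D)%N ->
  (size P1 <= e1.+1)%N -> (size P2 <= e2.+1)%N -> (size P3 <= e3.+1)%N ->
  (size Y1 <= (D - e1).+1)%N -> (size Y2 <= (D - e2).+1)%N ->
  (size Y3 <= (D - e3).+1)%N ->
  (size (P1 * Y1 + P2 * Y2 + P3 * Y3)%R <= D.+1)%N.
Proof.
move=> h1 h2 h3 p1 p2 p3 y1 y2 y3.
have sM e (P Y : {poly k}) : (e <= D)%N -> (size P <= e.+1)%N ->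
    (size Y <= (D - e).+1)%N -> (size (P * Y)%R <= D.+1)%N.
  by move=> he sP sY; apply: leq_trans (size_mul_bound sP sY) _; lia.
apply: leq_trans (size_polyD _ _) _; rewrite geq_max (sM e3) // andbT.
by apply: leq_trans (size_polyD _ _) _; rewrite geq_max (sM e1) // (sM e2).
Qed.

(* Bezout identity with the gcd itself (not only up to a constant). *)
Lemma bezout_gcdp (k : fieldType) (P Q : {poly k}) :
  exists A B, P * A + Q * B = gcdp P Q.
Proof.
have [u /eqpP [[c1 c2] /andP [/= n1 n2] E]] := Bezoutp P Q.
exists ((c1 / c2) *: u.1), ((c1 / c2) *: u.2).
rewrite -!scalerAr -scalerDr (mulrC P) (mulrC Q) (mulrC c1) -scalerA E.
by rewrite scalerA mulVf // scale1r.
Qed.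

Lemma minn3_spec (a1 a2 a3 : nat) (d := minn a1 (minn a2 a3)) :
  [/\ (d <= a1)%N, (d <= a2)%N, (d <= a3)%N & d = a1 \/ d = a2 \/ d = a3].
Proof. by rewrite /d; split; lia. Qed.

(* Univariate picture: Pi = cofi * g with g = gcd(P1, P2, P3) and the cofactors
   generating the unit ideal; gdeg is the largest d such that deg cofi <= ei - d
   for all i, so that u^(gdeg - deg g) g(v/u) is the homogeneous gcd. *)
Section CommonFactor.
Variables (k : fieldType) (e1 e2 e3 : nat) (P1 P2 P3 : {poly k}).
Hypotheses (nzP1 : P1 != 0) (nzP2 : P2 != 0) (nzP3 : P3 != 0).
Hypotheses (sP1 : (size P1 <= e1.+1)%N) (sP2 : (size P2 <= e2.+1)%N)
  (sP3 : (size P3 <= e3.+1)%N).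
Implicit Types (Y W : {poly k}).

Definition gcd3p : {poly k} := gcdp (gcdp P1 P2) P3.

Definition cof (P : {poly k}) : {poly k} := P %/ gcd3p.

Definition gdeg : nat :=
  minn (e1 - (size (cof P1)).-1)
    (minn (e2 - (size (cof P2)).-1) (e3 - (size (cof P3)).-1)).

Lemma gcd3p_neq0 : gcd3p != 0.
Proof. by rewrite !gcdp_eq0 (negbTE nzP3) andbF. Qed.

Lemma cofK : [/\ P1 = cof P1 * gcd3p, P2 = cof P2 * gcd3p & P3 = cof P3 * gcd3p].
Proof.
have d1 : gcd3p %| P1 by apply: dvdp_trans (dvdp_gcdl _ _) (dvdp_gcdl _ _).
have d2 : gcd3p %| P2 by apply: dvdp_trans (dvdp_gcdl _ _) (dvdp_gcdr _ _).
have d3 : gcd3p %| P3 by apply: dvdp_gcdr.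
by rewrite /cof !divpK.
Qed.

Lemma cof_neq0 : [/\ cof P1 != 0, cof P2 != 0 & cof P3 != 0].
Proof.
have [E1 E2 E3] := cofK.
split; [apply: contraNneq nzP1 | apply: contraNneq nzP2 | apply: contraNneq nzP3].
- by move=> E; rewrite E1 E mul0r.
- by move=> E; rewrite E2 E mul0r.
- by move=> E; rewrite E3 E mul0r.
Qed.

(* The cofactors are coprime: a Bezout relation with g divided out. *)
Lemma cof_bezout : exists Y1 Y2 Y3,
  cof P1 * Y1 + cof P2 * Y2 + cof P3 * Y3 = 1.
Proof.
have [A1 [A2 E12]] := bezout_gcdp P1 P2.
have [B12 [B3 E]] := bezout_gcdp (gcdp P1 P2) P3.
have EP : P1 * (A1 * B12) + P2 * (A2 * B12) + P3 * B3 = gcd3p.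
  by rewrite /gcd3p -E -E12; ring.
exists (A1 * B12), (A2 * B12), B3; apply: (mulIf gcd3p_neq0).
have [E1 E2 E3] := cofK.
by rewrite mul1r -[RHS]EP [in RHS]E1 [in RHS]E2 [in RHS]E3; ring.
Qed.

Lemma gdeg_bounds :
  [/\ (size gcd3p <= gdeg.+1)%N, [/\ (gdeg <= e1)%N, (gdeg <= e2)%N & (gdeg <= e3)%N],
      [/\ (size (cof P1) <= (e1 - gdeg).+1)%N, (size (cof P2) <= (e2 - gdeg).+1)%N
        & (size (cof P3) <= (e3 - gdeg).+1)%N] &
      size (cof P1) = (e1 - gdeg).+1 \/ size (cof P2) = (e2 - gdeg).+1 \/
      size (cof P3) = (e3 - gdeg).+1].
Proof.
have [E1 E2 E3] := cofK; have [n1 n2 n3] := cof_neq0.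
have := minn3_spec (e1 - (size (cof P1)).-1) (e2 - (size (cof P2)).-1)
                    (e3 - (size (cof P3)).-1); rewrite -/gdeg.
move: sP1 sP2 sP3; rewrite {1}E1 {1}E2 {1}E3 !size_mul ?gcd3p_neq0 //.
move: (size_poly_gt0 gcd3p) (size_poly_gt0 (cof P1)) (size_poly_gt0 (cof P2))
  (size_poly_gt0 (cof P3)); rewrite gcd3p_neq0 n1 n2 n3.
move: gdeg (size gcd3p) (size (cof P1)) (size (cof P2)) (size (cof P3)).
move=> d [|g] [|q1] [|q2] [|q3] // _ _ _ _ /= s1 s2 s3 [m1 m2 m3 m].
by split; [lia | split; lia | split; lia | lia].
Qed.

Variable D : nat.
Hypotheses (h12 : (e1 + e2 <= D)%N) (h13 : (e1 + e3 <= D)%N) (h23 : (e2 + e3 <= D)%N).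

Let e1D : (e1 <= D)%N. Proof. exact: leq_trans (leq_addr _ _) h12. Qed.
Let e2D : (e2 <= D)%N. Proof. exact: leq_trans (leq_addl _ _) h12. Qed.
Let e3D : (e3 <= D)%N. Proof. exact: leq_trans (leq_addl _ _) h13. Qed.

Let shift_sub e : (gdeg <= e)%N -> (e <= D)%N ->
  ((D - gdeg) - (e - gdeg) = D - e)%N.
Proof. by move=> *; lia. Qed.

Let shift_add a b : (gdeg <= a)%N -> (gdeg <= b)%N -> (a + b <= D)%N ->
  (a - gdeg + (b - gdeg) <= D - gdeg)%N.
Proof. by move=> *; lia. Qed.

Lemma comb3_image_sub Y1 Y2 Y3 :
  (size Y1 <= (D - e1).+1)%N -> (size Y2 <= (D - e2).+1)%N ->
  (size Y3 <= (D - e3).+1)%N ->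
  exists W, (size W <= (D - gdeg).+1)%N /\
            P1 * Y1 + P2 * Y2 + P3 * Y3 = gcd3p * W.
Proof.
move=> y1 y2 y3; have [_ [d1 d2 d3] [q1 q2 q3] _] := gdeg_bounds.
exists (cof P1 * Y1 + cof P2 * Y2 + cof P3 * Y3); split; last first.
  by have [{1}-> {1}-> {1}->] := cofK; ring.
apply: size_comb3 q1 q2 q3 _ _ _; rewrite ?leq_sub2r ?shift_sub //.
Qed.

Lemma comb3_image_sup W : (size W <= (D - gdeg).+1)%N ->
  exists Y1 Y2 Y3,
    [/\ (size Y1 <= (D - e1).+1)%N, (size Y2 <= (D - e2).+1)%N,
        (size Y3 <= (D - e3).+1)%N & P1 * Y1 + P2 * Y2 + P3 * Y3 = gcd3p * W].
Proof.
move=> sW; have [_ [d1 d2 d3] [q1 q2 q3] ex] := gdeg_bounds.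
have [Y1 [Y2 [Y3 EY]]] := cof_bezout; have [n1 n2 n3] := cof_neq0.
have [X1 [X2 [X3 [EW [x1 x2 x3]]]]] :=
  bounded_decomp3_sym EY n1 n2 n3 q1 q2 q3 ex (shift_add d1 d2 h12)
    (shift_add d1 d3 h13) (shift_add d2 d3 h23) sW.
exists X1, X2, X3.
rewrite -(shift_sub d1 e1D) -(shift_sub d2 e2D) -(shift_sub d3 e3D); split => //.
by rewrite EW; have [{1}-> {1}-> {1}->] := cofK; ring.
Qed.

End CommonFactor.

Lemma mul_rV_lin1_fun (k : fieldType) m n (f : 'rV[k]_m -> 'rV[k]_n) :
  (forall a u v, f (a *: u + v) = a *: f u + f v) ->
  forall u, u *m lin1_mx f = f u.
Proof.
move=> lf; pose fL : {linear 'rV[k]_m -> 'rV[k]_n} :=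
  HB.pack f (GRing.isLinear.Build _ _ _ _ f lf).
exact: (mul_rV_lin1 fL).
Qed.

Lemma rank_lin1_same_image (k : fieldType) m n r
    (f : 'rV[k]_m -> 'rV[k]_n) (g : 'rV[k]_r -> 'rV[k]_n) :
  (forall a u v, f (a *: u + v) = a *: f u + f v) ->
  (forall a u v, g (a *: u + v) = a *: g u + g v) ->
  (forall v, g v = 0 -> v = 0) ->
  (forall u, exists v, f u = g v) -> (forall v, exists u, g v = f u) ->
  \rank (lin1_mx f) = r.
Proof.
move=> lf lg ker_g fg gf.
have Ff := mul_rV_lin1_fun lf; have Fg := mul_rV_lin1_fun lg.
have /eqP free_g : row_free (lin1_mx g) by apply: inj_row_free => v; rewrite Fg => /ker_g.
have sub_fg : (lin1_mx f <= lin1_mx g)%MS.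
  apply/row_subP => i; rewrite rowE Ff; have [v ->] := fg (delta_mx 0 i).
  by rewrite -Fg submxMl.
have sub_gf : (lin1_mx g <= lin1_mx f)%MS.
  apply/row_subP => i; rewrite rowE Fg; have [u ->] := gf (delta_mx 0 i).
  by rewrite -Ff submxMl.
by apply/eqP; rewrite eqn_leq -{1}free_g (mxrankS sub_fg) -free_g (mxrankS sub_gf).
Qed.

(* Triples of forms of degrees a1, a2, a3 are coordinatized by row vectors of
   length (a1 + 1) + (a2 + 1) + (a3 + 1), through their dehomogenizations. *)
Section RowEncoding.
Variables (k : fieldType) (a1 a2 a3 : nat).
Local Notation N := (a1.+1 + a2.+1 + a3.+1)%N.
Implicit Types (w : 'rV[k]_N) (Y : {poly k}).

Definition rpoly1 w : {poly k} := rVpoly (lsubmx (lsubmx w)).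
Definition rpoly2 w : {poly k} := rVpoly (rsubmx (lsubmx w)).
Definition rpoly3 w : {poly k} := rVpoly (rsubmx w).

Definition row_of_polys Y1 Y2 Y3 : 'rV[k]_N :=
  row_mx (row_mx (poly_rV Y1) (poly_rV Y2)) (poly_rV Y3).

Definition triple_of_row w : triple k :=
  (homogenize a1 (rpoly1 w), homogenize a2 (rpoly2 w), homogenize a3 (rpoly3 w)).

Lemma size_rpoly w :
  [/\ (size (rpoly1 w) <= a1.+1)%N, (size (rpoly2 w) <= a2.+1)%N
    & (size (rpoly3 w) <= a3.+1)%N].
Proof. by split; apply: size_poly. Qed.

Lemma rpoly_row_of_polys Y1 Y2 Y3 :
  (size Y1 <= a1.+1)%N -> (size Y2 <= a2.+1)%N -> (size Y3 <= a3.+1)%N ->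
  [/\ rpoly1 (row_of_polys Y1 Y2 Y3) = Y1, rpoly2 (row_of_polys Y1 Y2 Y3) = Y2
    & rpoly3 (row_of_polys Y1 Y2 Y3) = Y3].
Proof.
by move=> s1 s2 s3; rewrite /rpoly1 /rpoly2 /rpoly3 /row_of_polys;
  rewrite !row_mxKl ?row_mxKr ?row_mxKl !poly_rV_K.
Qed.

Lemma rpoly_linear c w w' :
  [/\ rpoly1 (c *: w + w') = c%:P * rpoly1 w + rpoly1 w',
      rpoly2 (c *: w + w') = c%:P * rpoly2 w + rpoly2 w'
    & rpoly3 (c *: w + w') = c%:P * rpoly3 w + rpoly3 w'].
Proof. by rewrite /rpoly1 /rpoly2 /rpoly3; split; rewrite !linearP /= mul_polyC. Qed.

Lemma triple_of_row_sum n (c : 'I_n -> k) (r : 'I_n -> 'rV[k]_N) :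
  tcomb c (fun i => triple_of_row (r i)) = triple_of_row (\sum_(i < n) c i *: r i).
Proof.
rewrite /tcomb /triple_of_row /rpoly1 /rpoly2 /rpoly3 /=; congr (_, _, _);
  rewrite !linear_sum homogenize_sum; apply: eq_bigr => i _.
all: by rewrite !linearZ /= homogenizeZ.
Qed.

Lemma triple_of_row_eq0 w : triple_of_row w = (0, 0, 0) -> w = 0.
Proof.
have [s1 s2 s3] := size_rpoly w; case=> /eqP; rewrite homogenize_eq0 // => /eqP E1.
move=> /eqP; rewrite homogenize_eq0 // => /eqP E2 /eqP; rewrite homogenize_eq0 // => /eqP E3.
rewrite -[w]hsubmxK -[lsubmx w]hsubmxK -(rVpolyK (lsubmx (lsubmx w))).
rewrite -(rVpolyK (rsubmx (lsubmx w))) -(rVpolyK (rsubmx w)).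
by rewrite -/(rpoly1 w) -/(rpoly2 w) -/(rpoly3 w) E1 E2 E3 !linear0 !row_mx0.
Qed.

Lemma triple_of_row_of_polys (x1 x2 x3 : bipoly k) :
  homog a1 x1 -> homog a2 x2 -> homog a3 x3 ->
  triple_of_row (row_of_polys (dehom x1) (dehom x2) (dehom x3)) = (x1, x2, x3).
Proof.
move=> H1 H2 H3; rewrite /triple_of_row.
have [-> -> ->] := rpoly_row_of_polys (size_dehom H1) (size_dehom H2) (size_dehom H3).
by rewrite !homogenize_dehom.
Qed.

Lemma has_dim_kernel n (S : triple k -> Prop) (M : 'M[k]_(N, n)) :
  (forall w, w *m M = 0 -> S (triple_of_row w)) ->
  (forall x, S x -> exists2 w, w *m M = 0 & x = triple_of_row w) ->
  has_dim S (\rank (kermx M)).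
Proof.
move=> kerS Sker; set K := kermx M.
exists (fun i => triple_of_row (row i (row_base K))); split.
- move=> i; apply/kerS/sub_kermxP.
  by apply: submx_trans (row_sub i _) _; rewrite eq_row_base.
- move=> c E i.
  have : (\row_j c j) *m row_base K = 0.
    apply: triple_of_row_eq0; rewrite mulmx_sum_row.
    by under eq_bigr => j _ do rewrite mxE; rewrite -triple_of_row_sum -E.
  move/eqP; rewrite mulmx_free_eq0 ?row_base_free // => /eqP/rowP/(_ i).
  by rewrite !mxE.
- move=> x /Sker [w /sub_kermxP wK ->].
  have : (w <= row_base K)%MS by rewrite eq_row_base.
  case/submxP => c ->; exists (fun i => c 0 i).
  by rewrite triple_of_row_sum -mulmx_sum_row.
Qed.

End RowEncoding.

Section SyzygyDimension.
Variables (k : fieldType) (D e1 e2 e3 : nat) (R1 R2 R3 : bipoly k).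
Hypotheses (h1 : (e1 <= D)%N) (h2 : (e2 <= D)%N) (h3 : (e3 <= D)%N).
Hypotheses (H1 : homog e1 R1) (H2 : homog e2 R2) (H3 : homog e3 R3).
Local Notation N := ((D - e1).+1 + (D - e2).+1 + (D - e3).+1)%N.
Implicit Types (w : 'rV[k]_N).

Definition syz_poly w : {poly k} :=
  dehom R1 * rpoly1 w + dehom R2 * rpoly2 w + dehom R3 * rpoly3 w.

(* The combination has degree <= D, so it is faithfully stored in 'rV_(D+1). *)
Lemma size_syz_poly w : (size (syz_poly w) <= D.+1)%N.
Proof.
have [s1 s2 s3] := size_rpoly w.
exact: size_comb3 h1 h2 h3 (size_dehom H1) (size_dehom H2) (size_dehom H3) s1 s2 s3.
Qed.

Lemma syz_poly_linear c w w' : syz_poly (c *: w + w') = c%:P * syz_poly w + syz_poly w'.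
Proof.
by rewrite /syz_poly; have [-> -> ->] := rpoly_linear c w w'; ring.
Qed.

(* A row is in the kernel of the dehomogenized syzygy map exactly when it
   decodes to a syzygy: the combination is a form of degree D. *)
Lemma syz_triple_of_row w :
  syz D e1 e2 e3 R1 R2 R3 (triple_of_row w) <-> syz_poly w = 0.
Proof.
have [s1 s2 s3] := size_rpoly w.
have hom_sum := homog_comb3 h1 h2 h3 H1 H2 H3 (@homog_homogenize _ (D - e1)%N (rpoly1 w))
  (@homog_homogenize _ (D - e2)%N (rpoly2 w)) (@homog_homogenize _ (D - e3)%N (rpoly3 w)).
rewrite /syz /triple_of_row /=.
have -> : syz_poly w = dehom (R1 * homogenize (D - e1)%N (rpoly1 w) +
    R2 * homogenize (D - e2)%N (rpoly2 w) + R3 * homogenize (D - e3)%N (rpoly3 w)).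
  by rewrite !dehomD !dehomM !dehom_homogenize.
split=> [[_ _ _ ->]|E]; first by rewrite /dehom rmorph0.
split; try exact: homog_homogenize.
by apply/eqP; rewrite -(dehom_eq0 hom_sum) E.
Qed.

Definition syz_map w : 'rV[k]_D.+1 := poly_rV (syz_poly w).

Lemma syz_map_linear c w w' : syz_map (c *: w + w') = c *: syz_map w + syz_map w'.
Proof. by rewrite /syz_map -linearP syz_poly_linear -mul_polyC. Qed.

Lemma syz_map_ker w : w *m lin1_mx syz_map = 0 <-> syz_poly w = 0.
Proof.
rewrite (mul_rV_lin1_fun syz_map_linear) /syz_map.
split=> [/(congr1 rVpoly)|->]; last exact: linear0.
by rewrite poly_rV_K ?size_syz_poly // linear0.
Qed.

Definition image_within (t : nat) (G : {poly k}) : Prop :=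
  forall Y1 Y2 Y3 : {poly k}, (size Y1 <= (D - e1).+1)%N ->
    (size Y2 <= (D - e2).+1)%N -> (size Y3 <= (D - e3).+1)%N ->
  exists W : {poly k}, (size W <= t.+1)%N /\
    dehom R1 * Y1 + dehom R2 * Y2 + dehom R3 * Y3 = G * W.

Definition image_covers (t : nat) (G : {poly k}) : Prop :=
  forall W : {poly k}, (size W <= t.+1)%N -> exists Y1 Y2 Y3 : {poly k},
    [/\ (size Y1 <= (D - e1).+1)%N, (size Y2 <= (D - e2).+1)%N,
        (size Y3 <= (D - e3).+1)%N &
      dehom R1 * Y1 + dehom R2 * Y2 + dehom R3 * Y3 = G * W].

(* Under that description the syzygy map has rank t + 1, since it has the
   same image as the injective map W |-> G W. *)
Lemma rank_syz_map (t : nat) (G : {poly k}) :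
  G != 0 -> (size G + t <= D.+1)%N -> image_within t G -> image_covers t G ->
  \rank (lin1_mx syz_map) = t.+1.
Proof.
move=> nzG sG image_sub image_sup.
pose g (v : 'rV[k]_t.+1) : 'rV[k]_D.+1 := poly_rV (G * rVpoly v).
have size_g (v : 'rV[k]_t.+1) : (size (G * rVpoly v)%R <= D.+1)%N.
  by apply: leq_trans (size_mul_bound (leqnn _) (size_poly _ _)) _; rewrite addnS.
apply: (@rank_lin1_same_image _ _ _ _ _ g syz_map_linear).
- by move=> c u v; rewrite /g linearP /= mulrDr -scalerAr linearP.
- move=> v /(congr1 rVpoly); rewrite poly_rV_K // linear0 => /eqP.
  by rewrite mulf_eq0 (negbTE nzG) /= => /eqP E; rewrite -[v]rVpolyK E linear0.
- move=> w; have [s1 s2 s3] := size_rpoly w.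
  have [W [sW EW]] := image_sub _ _ _ s1 s2 s3.
  by exists (poly_rV W); rewrite /syz_map /g poly_rV_K // -EW.
- move=> v; have [Y1 [Y2 [Y3 [s1 s2 s3 EY]]]] := image_sup (rVpoly v) (size_poly _ _).
  exists (row_of_polys (D - e1)%N (D - e2)%N (D - e3)%N Y1 Y2 Y3).
  rewrite /syz_map /syz_poly.
  by have [-> -> ->] := rpoly_row_of_polys s1 s2 s3; rewrite EY.
Qed.

Lemma has_dim_syz (t : nat) (G : {poly k}) :
  G != 0 -> (size G + t <= D.+1)%N -> image_within t G -> image_covers t G ->
  has_dim (syz D e1 e2 e3 R1 R2 R3) (N - t.+1).
Proof.
move=> nzG sG image_sub image_sup.
rewrite -(rank_syz_map nzG sG image_sub image_sup) -mxrank_ker.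
apply: has_dim_kernel => [w /syz_map_ker /syz_triple_of_row //|].
move=> [[x1 x2] x3] [/= X1 X2 X3 EX].
pose w := row_of_polys (D - e1)%N (D - e2)%N (D - e3)%N (dehom x1) (dehom x2) (dehom x3).
have decode_w : triple_of_row w = (x1, x2, x3) by apply: triple_of_row_of_polys.
exists w => //; apply/syz_map_ker/syz_triple_of_row; rewrite decode_w.
by split.
Qed.

End SyzygyDimension.

Definition in_ideal3 (k : fieldType) (R1 R2 R3 p : bipoly k) : Prop :=
  exists x1 x2 x3, p = R1 * x1 + R2 * x2 + R3 * x3.

Section HomogeneousGcd.
Variable k : fieldType.
Implicit Types (G h p R : bipoly k).

Lemma bdvd_in_ideal3 h R1 R2 R3 p :
  bdvd h R1 -> bdvd h R2 -> bdvd h R3 -> in_ideal3 R1 R2 R3 p -> bdvd h p.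
Proof.
move=> [q1 ->] [q2 ->] [q3 ->] [x1 [x2 [x3 ->]]].
by exists (q1 * x1 + q2 * x2 + q3 * x3); ring.
Qed.

(* u^t and v^t are coprime: a divisor of G u^t and of G v^t divides G.
   Writing G u^t = h q1 and G v^t = h q2, we get q1 v^t = q2 u^t, so the
   v-expansion of q2 starts at v^t and G = h (q2 / v^t). *)
Lemma bdvd_cancel_monomials G h (t : nat) :
  h != 0 -> bdvd h (G * ('X^t)%:P) -> bdvd h (G * 'X^t) -> bdvd h G.
Proof.
move=> nzh [q1 E1] [q2 E2].
have nzu : (('X^t)%:P : bipoly k) != 0 by rewrite polyC_eq0 monic_neq0 ?monicXn.
have E : q1 * 'X^t = q2 * ('X^t)%:P.
  by apply: (mulfI nzh); rewrite !mulrA -E1 -E2 -!mulrA (mulrC 'X^t).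
exists (\poly_(j < size q1) q2`_(j + t)); apply: (mulIf nzu); rewrite E1 -mulrA.
congr (_ * _); apply/polyP => j; rewrite coefMC coef_poly.
case: ltnP => hj; last by rewrite mul0r; apply: nth_default.
have := congr1 (fun p : bipoly k => p`_(j + t)%N) E; rewrite /= coefMC coefMXn.
by rewrite ltnNge leq_addl /= addnK.
Qed.

Lemma is_gcd3_of_ideal G R1 R2 R3 (t : nat) :
  R1 != 0 -> bdvd G R1 -> bdvd G R2 -> bdvd G R3 ->
  in_ideal3 R1 R2 R3 (G * ('X^t)%:P) -> in_ideal3 R1 R2 R3 (G * 'X^t) ->
  is_gcd3 G R1 R2 R3.
Proof.
move=> nzR1 d1 d2 d3 Iu Iv; split=> // h h1 h2 h3.
have nzh : h != 0 by apply: contraNneq nzR1 => h0; case: h1 => q ->; rewrite h0 mul0r.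
by apply: (bdvd_cancel_monomials (t := t) nzh); apply: bdvd_in_ideal3 h1 h2 h3 _.
Qed.

Lemma bdvd_homogenize (e d : nat) R (Q g : {poly k}) :
  homog e R -> (d <= e)%N -> (size g <= d.+1)%N -> (size Q <= (e - d).+1)%N ->
  dehom R = Q * g -> bdvd (homogenize d g) R.
Proof.
move=> HR de sg sQ EP; exists (homogenize (e - d) Q); apply: (homog_dehom_inj HR).
  by rewrite -[X in homog X](subnKC de); apply: homogM; apply: homog_homogenize.
by rewrite dehomM !dehom_homogenize // EP mulrC.
Qed.

Lemma homogenize_in_ideal3 (D d e1 e2 e3 : nat) R1 R2 R3 (g : {poly k}) X :
  (e1 <= D)%N -> (e2 <= D)%N -> (e3 <= D)%N -> (d <= D)%N ->
  homog e1 R1 -> homog e2 R2 -> homog e3 R3 -> (size g <= d.+1)%N ->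
  image_covers D e1 e2 e3 R1 R2 R3 (D - d) g -> homog (D - d) X ->
  in_ideal3 R1 R2 R3 (homogenize d g * X).
Proof.
move=> h1 h2 h3 hd H1 H2 H3 sg image_sup HX.
have [Y1 [Y2 [Y3 [s1 s2 s3 EY]]]] := image_sup _ (size_dehom HX).
exists (homogenize (D - e1) Y1), (homogenize (D - e2) Y2), (homogenize (D - e3) Y3).
apply: (@homog_dehom_inj _ D).
- by rewrite -(subnKC hd); apply: homogM => //; apply: homog_homogenize.
- by apply: (homog_comb3 h1 h2 h3 H1 H2 H3); apply: homog_homogenize.
by rewrite !dehomD !dehomM !dehom_homogenize.
Qed.

End HomogeneousGcd.

Theorem lemma3p12 (k : fieldType) (D e1 e2 e3 : nat) (R1 R2 R3 : bipoly k) :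
  (e1 <= D)%N -> (e2 <= D)%N -> (e3 <= D)%N ->
  (e1 + e2 <= D)%N -> (e1 + e3 <= D)%N -> (e2 + e3 <= D)%N ->
  R1 != 0 -> R2 != 0 -> R3 != 0 ->
  homog e1 R1 -> homog e2 R2 -> homog e3 R3 ->
  exists (G : bipoly k) (d : nat),
    [/\ is_gcd3 G R1 R2 R3, G != 0, homog d G &
        has_dim (syz D e1 e2 e3 R1 R2 R3) (2 + 2 * D + d - (e1 + e2 + e3))%N].
Proof.
move=> h1 h2 h3 h12 h13 h23 nzR1 nzR2 nzR3 H1 H2 H3.
have nzP1 : dehom R1 != 0 by rewrite (dehom_eq0 H1).
have nzP2 : dehom R2 != 0 by rewrite (dehom_eq0 H2).
have nzP3 : dehom R3 != 0 by rewrite (dehom_eq0 H3).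
have sP1 := size_dehom H1; have sP2 := size_dehom H2; have sP3 := size_dehom H3.
have [sG [d1 d2 d3] [q1 q2 q3] _] := gdeg_bounds nzP1 nzP2 nzP3 sP1 sP2 sP3.
have [E1 E2 E3] := cofK (dehom R1) (dehom R2) (dehom R3).
have image_sub := comb3_image_sub nzP1 nzP2 nzP3 sP1 sP2 sP3 h12 h13 h23.
have image_sup := comb3_image_sup nzP1 nzP2 nzP3 sP1 sP2 sP3 h12 h13 h23.
set g := gcd3p _ _ _ in sG E1 E2 E3 image_sub image_sup *.
set d := gdeg _ _ _ _ _ _ in sG d1 d2 d3 q1 q2 q3 image_sub image_sup *.
have dD : (d <= D)%N by apply: leq_trans d1 h1.
(* G u^(D-d) and G v^(D-d) lie in the ideal, so G is a gcd. *)
have Iu := homogenize_in_ideal3 h1 h2 h3 dD H1 H2 H3 sG image_sup (@homog_uXn k (D - d)).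
have Iv := homogenize_in_ideal3 h1 h2 h3 dD H1 H2 H3 sG image_sup (@homog_vXn k (D - d)).
exists (homogenize d g), d; split.
- apply: is_gcd3_of_ideal nzR1 _ _ _ Iu Iv.
  + exact: bdvd_homogenize H1 d1 sG q1 E1.
  + exact: bdvd_homogenize H2 d2 sG q2 E2.
  + exact: bdvd_homogenize H3 d3 sG q3 E3.
- by rewrite homogenize_eq0 // gcd3p_neq0.
- exact: homog_homogenize.
have -> : (2 + 2 * D + d - (e1 + e2 + e3) =
  (D - e1).+1 + (D - e2).+1 + (D - e3).+1 - (D - d).+1)%N by lia.
by apply: has_dim_syz image_sub image_sup; rewrite ?gcd3p_neq0 //; lia.
Qed.
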